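(* Let $\varphi\in\mathcal{A}$ be w.h.i.s. Then, with $\pi:\mathcal{A}\to\mathcal{A}_\varphi$ the projection: every skew-symmetric $3$-derivation of $\mathcal{A}_\varphi$ is zero, so $H^3(\mathcal{A}_\varphi)=\{0\}$; the skew-symmetric $1$-derivations (resp. $2$-derivations) of $\mathcal{A}_\varphi$ are identified with $\{\pi(\vec f)\in\mathcal{A}_\varphi^3\mid\vec f\cdot\vec\nabla\varphi\in\langle\varphi\rangle\}$ (resp. $\{\pi(\vec f)\in\mathcal{A}_\varphi^3\mid\vec f\times\vec\nabla\varphi\in\langle\varphi\rangle\}$); and $H^0(\mathcal{A}_\varphi)\simeq\{\pi(f)\mid\vec\nabla f\times\vec\nabla\varphi\in\langle\varphi\rangle\}$, $H^1(\mathcal{A}_\varphi)\simeq\dfrac{\{\pi(\vec f)\mid\vec f\cdot\vec\nabla\varphi\in\langle\varphi\rangle,\ -\vec\nabla(\vec f\cdot\vec\nabla\varphi)+\mathrm{Div}(\vec f)\vec\nabla\varphi\in\langle\varphi\rangle\}}{\{\pi(\vec\nabla f\times\vec\nabla\varphi)\mid f\in\mathcal{A}\}}$, $H^2(\mathcal{A}_\varphi)\simeq\dfrac{\{\pi(\vec f)\mid\vec f\times\vec\nabla\varphi\in\langle\varphi\rangle\}}{\{\pi(-\vec\nabla(\vec f\cdot\vec\nabla\varphi)+\mathrm{Div}(\vec f)\vec\nabla\varphi)\mid\vec f\in\mathcal{A}^3,\ \vec f\cdot\vec\nabla\varphi\in\langle\varphi\rangle\}}$, where $\langle\varphi\rangle$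 means the ideal (or submodule of $\mathcal{A}^3$) generated by $\varphi$.
   Context: $\mathbf{F}$ is a field of characteristic zero and $\mathcal{A}=\mathbf{F}[x,y,z]$. Elements of $\mathcal{A}^3$ are treated as vector fields: $\vec f\cdot\vec g$, $\vec f\times\vec g$ are the usual inner and cross products, $\vec\nabla f=(\partial f/\partial x,\partial f/\partial y,\partial f/\partial z)$, $\vec\nabla\times$ is the curl and $\mathrm{Div}$ the divergence. Fix positive integers $\varpi_1,\varpi_2,\varpi_3$ without common divisor $>1$ (weights of $x,y,z$). A nonzero polynomial is weight homogeneous of degree $d$ if it is an $\mathbf{F}$-linear combination of monomials $x^ay^bz^c$ with $a\varpi_1+b\varpi_2+c\varpi_3=d$. $\varphi\in\mathcal{A}$ is w.h.i.s. if it is weight homogeneous and $\mathcal{A}_{sing}:=\mathcal{A}/\langle\partial_x\varphi,\partial_y\varphi,\partial_z\varphi\rangle$ is a nonzero finite-dimensional $\mathbf{F}$-vector space. The Poisson bracket $\{\cdot,\cdot\}_\varphi$ on $\mathcal{A}$ is determined by $\{x,y\}_\varphi=\partial_z\varphi$, $\{y,z\}_\varphi=\partial_x\varphi$, $\{z,x\}_\varphi=\partial_y\varphi$; $\varphi$ is a Casimir, so it induces a Poisson bracket $\{\cdot,\cdot\}_{\mathcal{A}_\varphi}$ on $\mathcal{A}_\varphi:=\mathcal{A}/\langle\varphi\rangle$ with $\{\pi(f),\pi(g)\}_{\mathcal{A}_\varphi}=\pi(\{f,g\}_\varphi)$; for $\vec f=(f_1,f_2,f_3)$, $\pi(\vec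 f):=(\pi(f_1),\pi(f_2),\pi(f_3))$. For a Poisson algebra $(\mathcal{B},\{\cdot,\cdot\})$, the Poisson cochains of degree $k$ are the skew-symmetric $k$-derivations $Q:\mathcal{B}^k\to\mathcal{B}$, with coboundary $\delta Q(f_0,\dots,f_k)=\sum_i(-1)^i\{f_i,Q(f_0,\dots,\widehat{f_i},\dots,f_k)\}+\sum_{i<j}(-1)^{i+j}Q(\{f_i,f_j\},f_0,\dots,\widehat{f_i},\dots,\widehat{f_j},\dots,f_k)$; $H^k(\mathcal{A}_\varphi)$ denotes the resulting Poisson cohomology of $(\mathcal{A}_\varphi,\{\cdot,\cdot\}_{\mathcal{A}_\varphi})$. A $1$-derivation of $\mathcal{A}_\varphi$ is identified with $(Q[\pi x],Q[\pi y],Q[\pi z])$ and a $2$-derivation with $(Q[\pi y,\pi z],Q[\pi z,\pi x],Q[\pi x,\pi y])$. *)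

From HB Require Import structures.
From mathcomp Require Import all_boot all_order all_algebra.
From mathcomp Require Import mpoly.
Set Implicit Arguments. Unset Strict Implicit. Unset Printing Implicit Defensive.
Import Order.TTheory GRing.Theory.
Local Open Scope ring_scope.

Section Defs.
Variable F : fieldType.
Notation A := {mpoly F[3]}.

Definition i0 : 'I_3 := @Ordinal 3 0 isT.
Definition i1 : 'I_3 := @Ordinal 3 1 isT.
Definition i2 : 'I_3 := @Ordinal 3 2 isT.

Definition vx : A := 'X_i0.
Definition vy : A := 'X_i1.
Definition vz : A := 'X_i2.

Definition vec := (A * A * A)%type.
Definition mkv (a b c : A) : vec := (a, b, c).
Definition c1 (v : vec) : A := v.1.1.
Definition c2 (v : vec) : A := v.1.2.
Definition c3 (v : vec) : A := v.2.

Definition dotv (f g : vec) : A := c1 f * c1 g + c2 f * c2 g + c3 f * c3 g.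
Definition crossv (f g : vec) : vec :=
  mkv (c2 f * c3 g - c3 f * c2 g) (c3 f * c1 g - c1 f * c3 g) (c1 f * c2 g - c2 f * c1 g).
Definition grad (f : A) : vec := mkv (f^`M(i0)) (f^`M(i1)) (f^`M(i2)).
Definition Divv (f : vec) : A := (c1 f)^`M(i0) + (c2 f)^`M(i1) + (c3 f)^`M(i2).
Definition addv (f g : vec) : vec := mkv (c1 f + c1 g) (c2 f + c2 g) (c3 f + c3 g).
Definition oppv (f : vec) : vec := mkv (- c1 f) (- c2 f) (- c3 f).
Definition smulv (a : A) (f : vec) : vec := mkv (a * c1 f) (a * c2 f) (a * c3 f).

Definition wdeg (w : 'I_3 -> nat) (m : 'X_{1..3}) : nat := \sum_(i < 3) w i * m i.
Definition weight_homogeneous (w : 'I_3 -> nat) (p : A) : Prop :=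
  p != 0 /\ exists d : nat, forall m, m \in msupp p -> wdeg w m = d.

Definition in_ideal3 (g1 g2 g3 p : A) : Prop :=
  exists a1 a2 a3 : A, p = a1 * g1 + a2 * g2 + a3 * g3.

(* A_sing := A / <d_x phi, d_y phi, d_z phi> is nonzero and finite dimensional *)
Definition Asing_nonzero (phi : A) : Prop :=
  ~ in_ideal3 (phi^`M(i0)) (phi^`M(i1)) (phi^`M(i2)) 1.
Definition Asing_findim (phi : A) : Prop :=
  exists (n : nat) (s : 'I_n -> A), forall p : A, exists c : 'I_n -> F,
    in_ideal3 (phi^`M(i0)) (phi^`M(i1)) (phi^`M(i2)) (p - \sum_(i < n) c i *: s i).

Definition whis (w : 'I_3 -> nat) (phi : A) : Prop :=
  weight_homogeneous w phi /\ Asing_nonzero phi /\ Asing_findim phi.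

Definition inI (phi p : A) : Prop := exists h : A, p = h * phi.
Definition inIv (phi : A) (v : vec) : Prop := inI phi (c1 v) /\ inI phi (c2 v) /\ inI phi (c3 v).

(* equality in A_phi (resp. A_phi^3) of the projections pi f, pi g *)
Definition eqm (phi f g : A) : Prop := inI phi (f - g).
Definition eqmv (phi : A) (f g : vec) : Prop :=
  eqm phi (c1 f) (c1 g) /\ eqm phi (c2 f) (c2 g) /\ eqm phi (c3 f) (c3 g).

(* the Poisson bracket {f,g}_phi = (grad f x grad g) . grad phi : the unique
   biderivation with {x,y}=phi_z, {y,z}=phi_x, {z,x}=phi_y *)
Definition pbr (phi f g : A) : A := dotv (crossv (grad f) (grad g)) (grad phi).

(* Skew-symmetric k-derivations of A_phi, represented by maps on
   representatives A^k -> A which are well defined modulo phi and satisfy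
   all identities modulo phi. *)
Definition is_der1 (phi : A) (Q : A -> A) : Prop :=
  [/\ forall f f', eqm phi f f' -> eqm phi (Q f) (Q f'),
      forall (a : F) f g, eqm phi (Q (a *: f + g)) (a *: Q f + Q g)
    & forall f g, eqm phi (Q (f * g)) (f * Q g + g * Q f)].

Definition is_der2 (phi : A) (Q : A -> A -> A) : Prop :=
  [/\ forall f f' g, eqm phi f f' -> eqm phi (Q f g) (Q f' g),
      forall (a : F) f g h, eqm phi (Q (a *: f + g) h) (a *: Q f h + Q g h),
      forall f g h, eqm phi (Q (f * g) h) (f * Q g h + g * Q f h)
    & forall f g, eqm phi (Q f g) (- Q g f)].

Definition is_der3 (phi : A) (Q : A -> A -> A -> A) : Prop :=
  [/\ forall f f' g h, eqm phi f f' -> eqm phi (Q f g h) (Q f' g h),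
      forall (a : F) f g h k, eqm phi (Q (a *: f + g) h k) (a *: Q f h k + Q g h k),
      forall f g h k, eqm phi (Q (f * g) h k) (f * Q g h k + g * Q f h k),
      forall f g h, eqm phi (Q f g h) (- Q g f h)
    & forall f g h, eqm phi (Q f g h) (- Q f h g)].

(* Poisson coboundary (computed on representatives, pi is a Poisson morphism) *)
Definition delta0 (phi h : A) : A -> A := fun f0 => pbr phi f0 h.
Definition delta1 (phi : A) (Q : A -> A) : A -> A -> A := fun f0 f1 =>
  pbr phi f0 (Q f1) - pbr phi f1 (Q f0) - Q (pbr phi f0 f1).
Definition delta2 (phi : A) (Q : A -> A -> A) : A -> A -> A -> A := fun f0 f1 f2 =>
  pbr phi f0 (Q f1 f2) - pbr phi f1 (Q f0 f2) + pbr phi f2 (Q f0 f1)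
  - Q (pbr phi f0 f1) f2 + Q (pbr phi f0 f2) f1 - Q (pbr phi f1 f2) f0.

Definition trip1 (Q : A -> A) : vec := mkv (Q vx) (Q vy) (Q vz).
Definition trip2 (Q : A -> A -> A) : vec := mkv (Q vy vz) (Q vz vx) (Q vx vy).

Definition Lvec (phi : A) (f : vec) : vec :=
  addv (oppv (grad (dotv f (grad phi)))) (smulv (Divv f) (grad phi)).

End Defs.

(* A cochain of A_phi is determined modulo phi by its values on the coordinates
   (chain rule).  This identifies 1- and 2-derivations with vector fields subject
   to the stated tangency conditions, and turns the Poisson coboundaries into the
   vector-calculus expressions of the statement.  The one non-formal point is that
   every skew 3-derivation Q vanishes: expanding Q(phi, -, -) = 0 shows that the
   Jacobian ideal annihilates Q(x, y, z) in A_phi, and this annihilator is zero.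
   Indeed, as A_sing is finite dimensional, some nonzero polynomial in a single
   variable X_v lies in the Jacobian ideal, and weight homogeneity lets us keep just
   one of its monomials, a power of X_v.  Moreover phi cannot be divisible by both x
   and y, since setting x = y = 0 would then kill the Jacobian ideal but not z^k; so
   some prime X_v does not divide phi and can be cancelled. *)

From HB Require Import structures.
From mathcomp Require Import all_boot all_order all_algebra.
From mathcomp Require Import mpoly ring.
From Stdlib Require Import Setoid Morphisms.
Import GRing.Theory.
Local Open Scope ring_scope.

Section IdealMembership.
Variables (F : fieldType) (phi : {mpoly F[3]}).

Lemma inI0 : inI phi 0. Proof. by exists 0; rewrite mul0r. Qed.

Lemma inID {a b} : inI phi a -> inI phi b -> inI phi (a + b).
Proof. by move=> [h1 ->] [h2 ->]; exists (h1 + h2); rewrite mulrDl. Qed.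

Lemma inIN {a} : inI phi a -> inI phi (- a).
Proof. by move=> [h ->]; exists (- h); rewrite mulNr. Qed.

Lemma inIMr c {a} : inI phi a -> inI phi (c * a).
Proof. by move=> [h ->]; exists (c * h); rewrite mulrA. Qed.

Lemma inI_mulphi c : inI phi (c * phi). Proof. by exists c. Qed.

Lemma eqm_refl a : eqm phi a a. Proof. by rewrite /eqm subrr; apply: inI0. Qed.

Lemma eqm_sym a b : eqm phi a b -> eqm phi b a.
Proof. by rewrite /eqm => /inIN; rewrite opprB. Qed.

Lemma eqm_trans a b c : eqm phi a b -> eqm phi b c -> eqm phi a c.
Proof. by rewrite /eqm => hab hbc; have := inID hab hbc; rewrite addrA subrK. Qed.

Lemma eqm_eq a b : a = b -> eqm phi a b. Proof. by move->; apply: eqm_refl. Qed.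

Lemma eqm0 a : eqm phi a 0 <-> inI phi a. Proof. by rewrite /eqm subr0. Qed.

Lemma eqm_phi0 : eqm phi phi 0. Proof. by apply/eqm0; exists 1; rewrite mul1r. Qed.

Lemma eqm_opp_eq0 a : (2%:R : F) != 0 -> eqm phi a (- a) -> eqm phi a 0.
Proof.
rewrite /eqm opprK subr0 => h2 /(inIMr (2^-1)%:MP).
by rewrite -mulr2n -(mulr_natl a) mulrA -mpolyC_nat -mpolyCM mulVf // mpolyC1 mul1r.
Qed.

End IdealMembership.
Arguments inID {F phi a b}.
Arguments inIN {F phi a}.
Arguments inIMr {F phi} c {a}.
Arguments eqm_sym {F phi a b}.
Arguments eqm_trans {F phi a b c}.
Arguments eqm_phi0 {F phi}.

Add Parametric Relation (F : fieldType) (phi : {mpoly F[3]}) : {mpoly F[3]} (eqm phi)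
  reflexivity proved by (@eqm_refl F phi)
  symmetry proved by (@eqm_sym F phi)
  transitivity proved by (@eqm_trans F phi) as eqm_rel.

Add Parametric Morphism (F : fieldType) (phi : {mpoly F[3]}) : (@GRing.add {mpoly F[3]})
  with signature eqm phi ==> eqm phi ==> eqm phi as eqm_add.
Proof. by move=> a b hab c d hcd; have := inID hab hcd; rewrite /eqm opprD addrACA. Qed.

Add Parametric Morphism (F : fieldType) (phi : {mpoly F[3]}) : (@GRing.opp {mpoly F[3]})
  with signature eqm phi ==> eqm phi as eqm_opp.
Proof. by move=> a b /inIN; rewrite /eqm opprB opprK addrC. Qed.

Add Parametric Morphism (F : fieldType) (phi : {mpoly F[3]}) : (@GRing.mul {mpoly F[3]})
  with signature eqm phi ==> eqm phi ==> eqm phi as eqm_mul.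
Proof.
move=> a b hab c d hcd; have := inID (inIMr c hab) (inIMr b hcd).
by rewrite /eqm; congr inI; ring.
Qed.

Add Parametric Morphism (F : fieldType) (phi : {mpoly F[3]}) (c : F) :
  (@GRing.scale F {mpoly F[3]} c) with signature eqm phi ==> eqm phi as eqm_scale.
Proof. by move=> a b /(inIMr c%:MP); rewrite /eqm mulrBr !mul_mpolyC. Qed.

Ltac vec_unfold :=
  rewrite /pbr /dotv /crossv /grad /trip1 /trip2 /Lvec /addv /oppv /smulv /Divv
          /c1 /c2 /c3 /mkv /=.

Section PoissonBracket.
Variables (F : fieldType) (phi : {mpoly F[3]}).

Lemma pbrC f g : pbr phi f g = - pbr phi g f.
Proof. by vec_unfold; ring. Qed.

Lemma pbrMr f g h : pbr phi f (g * h) = g * pbr phi f h + h * pbr phi f g.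
Proof. by vec_unfold; rewrite !mderivM; ring. Qed.

Lemma pbrMl f g h : pbr phi (g * h) f = g * pbr phi h f + h * pbr phi g f.
Proof. by rewrite pbrC pbrMr !(pbrC _ f); ring. Qed.

Lemma pbrDr f g h : pbr phi f (g + h) = pbr phi f g + pbr phi f h.
Proof. by vec_unfold; rewrite !mderivD; ring. Qed.

Lemma pbrNr f g : pbr phi f (- g) = - pbr phi f g.
Proof. by vec_unfold; rewrite !mderivN; ring. Qed.

Lemma pbr_linr f (a : F) g h : pbr phi f (a *: g + h) = a *: pbr phi f g + pbr phi f h.
Proof. by rewrite -!mul_mpolyC; vec_unfold; rewrite !mderivD !mderivM !mderivC; ring. Qed.

Lemma pbr_linl f (a : F) g h : pbr phi (a *: g + h) f = a *: pbr phi g f + pbr phi h f.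
Proof. by rewrite pbrC pbr_linr opprD -scalerN -!pbrC. Qed.

Lemma pbr0r f : pbr phi f 0 = 0.
Proof. by vec_unfold; rewrite !mderiv0; ring. Qed.

Lemma pbr_phi f : pbr phi f phi = 0.
Proof. by vec_unfold; ring. Qed.

Lemma pbr_inI f g : inI phi g -> inI phi (pbr phi f g).
Proof. by move=> [h ->]; rewrite pbrMr pbr_phi mulr0 add0r mulrC; apply: inI_mulphi. Qed.

End PoissonBracket.

Add Parametric Morphism (F : fieldType) (phi : {mpoly F[3]}) : (pbr phi)
  with signature eqm phi ==> eqm phi ==> eqm phi as eqm_pbr.
Proof.
move=> a b hab c d hcd; apply: (@eqm_trans _ _ _ (pbr phi a d)).
  by rewrite /eqm -pbrNr -pbrDr; apply: pbr_inI.
by rewrite /eqm !(pbrC _ _ _ d) -opprD -pbrNr -pbrDr; apply/inIN/pbr_inI.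
Qed.

Lemma mderiv_coord (F : fieldType) (i j : 'I_3) : ('X_i : {mpoly F[3]})^`M(j) = (i == j)%:R.
Proof.
rewrite mderivX mnm1E; case: eqP => [<-|_]; last by rewrite scale0r.
by rewrite -{1}[U_(i)%MM]add0m addmK mpolyX0 scale1r.
Qed.

Ltac coord_unfold := rewrite /vx /vy /vz ?mderiv_coord /=.

Lemma ord3P (i : 'I_3) : [\/ i = i0, i = i1 | i = i2].
Proof. by case: i => [[|[|[|//]]] ?]; [apply: Or31|apply: Or32|apply: Or33]; apply: val_inj. Qed.

Section Derivation1.
Variables (F : fieldType) (phi : {mpoly F[3]}) (D : {mpoly F[3]} -> {mpoly F[3]}).
Hypothesis hD : is_der1 phi D.

Lemma der1D f g : eqm phi (D (f + g)) (D f + D g).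
Proof. by case: hD => _ + _ => /(_ 1 f g); rewrite !scale1r. Qed.

Lemma der10 : eqm phi (D 0) 0.
Proof.
have := der1D 0 0; rewrite addr0 /eqm => h.
by have := inIN h; congr inI; ring.
Qed.

Lemma der1Z a f : eqm phi (D (a *: f)) (a *: D f).
Proof. by case: hD => _ + _ => /(_ a f 0); rewrite addr0 der10 addr0. Qed.

Lemma der1N f : eqm phi (D (- f)) (- D f).
Proof. by rewrite -scaleN1r der1Z scaleN1r; reflexivity. Qed.

Lemma der11 : eqm phi (D 1) 0.
Proof.
case: hD => _ _ /(_ 1 1); rewrite !mul1r /eqm => /inIN.
by congr inI; ring.
Qed.

Lemma der1_chain p : eqm phi (D p) (dotv (trip1 D) (grad p)).
Proof.
pose P p := eqm phi (D p) (dotv (trip1 D) (grad p)).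
have PD f g : P f -> P g -> P (f + g).
  by rewrite /P der1D => -> ->; apply: eqm_eq; vec_unfold; rewrite !mderivD; ring.
have PZ a f : P f -> P (a *: f).
  by rewrite /P der1Z => ->; apply: eqm_eq; vec_unfold; rewrite !mderivZ -!mul_mpolyC; ring.
have PM f g : P f -> P g -> P (f * g).
  rewrite /P => hf hg; case: hD => _ _ ->; rewrite hf hg.
  by apply: eqm_eq; vec_unfold; rewrite !mderivM; ring.
have PX i : P 'X_i.
  by rewrite /P; case: (ord3P i) => ->; apply: eqm_eq; vec_unfold; coord_unfold; ring.
have P1 : P 1.
  by rewrite /P der11; apply: eqm_eq; vec_unfold; rewrite -mpolyC1 !mderivC; ring.
have PXm m : P 'X_[m].
  rewrite mpolyXE_id; apply: big_ind => [//||i _]; first exact: PM.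
  by elim: (m i) => [|k ihk]; rewrite ?expr0 // exprS; apply: PM.
elim/mpolyind: p => [|c m p _ _ hp]; last by apply: PD => //; apply: PZ.
by rewrite /P der10; apply: eqm_eq; vec_unfold; rewrite !mderiv0; ring.
Qed.

Lemma der1_tangent : inI phi (dotv (trip1 D) (grad phi)).
Proof.
apply/eqm0; rewrite -(der1_chain phi).
by case: (hD) => wd _ _; rewrite (wd _ _ eqm_phi0); apply: der10.
Qed.

End Derivation1.
Arguments der1D {F phi D}.
Arguments der10 {F phi D}.
Arguments der1Z {F phi D}.
Arguments der1N {F phi D}.
Arguments der1_chain {F phi D}.
Arguments der1_tangent {F phi D}.

Lemma der1_eq_trip1 {F : fieldType} {phi : {mpoly F[3]}} (D D' : {mpoly F[3]} -> {mpoly F[3]}) :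
  is_der1 phi D -> is_der1 phi D' -> eqmv phi (trip1 D) (trip1 D') ->
  forall g, eqm phi (D g) (D' g).
Proof.
move=> hD hD' [e1 [e2 e3]] g; rewrite (der1_chain hD) (der1_chain hD').
by move: e1 e2 e3; vec_unfold => -> -> ->; reflexivity.
Qed.

Section Derivation2.
Variables (F : fieldType) (phi : {mpoly F[3]}) (Q : {mpoly F[3]} -> {mpoly F[3]} -> {mpoly F[3]}).
Hypotheses (hQ : is_der2 phi Q) (h2 : (2%:R : F) != 0).

Lemma der2_der1l g : is_der1 phi (Q^~ g).
Proof. by case: hQ => wd hl hm _; split=> *; [apply: wd | apply: hl | apply: hm]. Qed.

Lemma der2_der1r f : is_der1 phi (Q f).
Proof.
case: hQ => wd hl hm hs; split=> [g g' e | a g g' | g g'].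
- by rewrite (hs f g) (hs f g') (wd _ _ _ e); reflexivity.
- by rewrite (hs f) hl (hs f g) (hs f g'); apply: eqm_eq; rewrite scalerN opprD.
- by rewrite (hs f) hm (hs f g) (hs f g'); apply: eqm_eq; ring.
Qed.

Lemma der2_chain f g : eqm phi (Q f g) (dotv (crossv (grad f) (grad g)) (trip2 Q)).
Proof.
case: (hQ) => _ _ _ hs.
have diag a : eqm phi (Q a a) 0 by apply: eqm_opp_eq0.
rewrite (der1_chain (der2_der1l g)); vec_unfold.
rewrite (der1_chain (der2_der1r (vx F)) g) (der1_chain (der2_der1r (vy F)) g).
rewrite (der1_chain (der2_der1r (vz F)) g); vec_unfold.
rewrite (diag (vx F)) (diag (vy F)) (diag (vz F)).
rewrite (hs (vy F) (vx F)) (hs (vz F) (vy F)) (hs (vx F) (vz F)).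
by apply: eqm_eq; ring.
Qed.

Lemma der2_tangent : inIv phi (crossv (trip2 Q) (grad phi)).
Proof.
have Qphi g : eqm phi (Q phi g) 0.
  by case: (hQ) => wd _ _ _; rewrite (wd _ _ g eqm_phi0); apply: (der10 (der2_der1l g)).
move: (Qphi (vx F)) (Qphi (vy F)) (Qphi (vz F)); rewrite !(der2_chain phi).
move=> /eqm0 hx /eqm0 hy /eqm0 hz.
by split; [|split]; [move: hx | move: hy | move: hz]; congr inI; vec_unfold; coord_unfold; ring.
Qed.

End Derivation2.
Arguments der2_der1l {F phi Q}.
Arguments der2_der1r {F phi Q}.
Arguments der2_chain {F phi Q}.
Arguments der2_tangent {F phi Q}.

Lemma der2_eq_trip2 {F : fieldType} {phi : {mpoly F[3]}} (Q Q' : {mpoly F[3]} -> {mpoly F[3]} -> {mpoly F[3]}) :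
  (2%:R : F) != 0 -> is_der2 phi Q -> is_der2 phi Q' -> eqmv phi (trip2 Q) (trip2 Q') ->
  forall g h, eqm phi (Q g h) (Q' g h).
Proof.
move=> h2 hQ hQ' [e1 [e2 e3]] g h; rewrite (der2_chain hQ h2) (der2_chain hQ' h2).
by move: e1 e2 e3; vec_unfold => -> -> ->; reflexivity.
Qed.

Section VariableSubstitution.
Variable F : fieldType.
Local Notation A := {mpoly F[3]}.

Lemma mpolyX_neq0 (m : 'X_{1..3}) : 'X_[m] != 0 :> A.
Proof. by apply/eqP => /(congr1 (mcoeff m)); rewrite mcoeffX eqxx mcoeff0 => /eqP; rewrite oner_eq0. Qed.

Definition setX0 (v : 'I_3) (p : A) : A :=
  p \mPo [tuple (if i == v then 0 else 'X_i) | i < 3].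

Lemma setX0M v p q : setX0 v (p * q) = setX0 v p * setX0 v q.
Proof. exact: rmorphM. Qed.

Lemma setX0D v p q : setX0 v (p + q) = setX0 v p + setX0 v q.
Proof. exact: comp_mpolyD. Qed.

Lemma setX0X v i : setX0 v 'X_i = if i == v then 0 else 'X_i.
Proof. by rewrite /setX0 comp_mpolyXU nth_mktuple. Qed.

Lemma setX0_decomp v p : exists r, p = setX0 v p + 'X_v * r.
Proof.
elim/mpolyind: p => [|c m p _ _ [r hr]].
  by exists 0; rewrite /setX0 comp_mpoly0 mulr0 addr0.
rewrite /setX0 comp_mpolyD comp_mpolyZ comp_mpolyX.
case: (eqVneq (m v) 0%N) => hmv.
  exists r; rewrite [in LHS]hr.
  have -> : \prod_(i < 3) tnth [tuple (if i == v then 0 else 'X_i) | i < 3] i ^+ m i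
            = 'X_[m] :> A.
    rewrite mpolyXE_id; apply: eq_bigr => i _; rewrite tnth_mktuple.
    by case: eqP => [->|//]; rewrite hmv !expr0.
  by rewrite /setX0; ring.
exists (c *: 'X_[m - U_(v)] + r).
have -> : \prod_(i < 3) tnth [tuple (if i == v then 0 else 'X_i) | i < 3] i ^+ m i = 0 :> A.
  by rewrite (bigD1 v) //= tnth_mktuple eqxx expr0n (negbTE hmv) mul0r.
have -> : 'X_[m] = 'X_v * 'X_[m - U_(v)] :> A.
  rewrite -mpolyXD; congr mpolyX; apply/mnmP => i; rewrite mnmDE mnmBE mnm1E.
  by case: eqP => [<-|_]; [rewrite add1n subn1 prednK // lt0n | rewrite add0n subn0].
by rewrite [in LHS]hr -!mul_mpolyC /setX0; ring.
Qed.

Lemma dvdX_setX0 v p : inI ('X_v : A) p <-> setX0 v p = 0.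
Proof.
split=> [[h ->]|hp]; first by rewrite setX0M setX0X eqxx mulr0.
by have [r hr] := setX0_decomp v p; exists r; rewrite hr hp add0r mulrC.
Qed.

Lemma dvdX_mul v a b : inI ('X_v : A) (a * b) -> inI ('X_v : A) a \/ inI ('X_v : A) b.
Proof. by rewrite !dvdX_setX0 setX0M => /eqP; rewrite mulf_eq0 => /orP[] /eqP; by [left|right]. Qed.

Lemma inI_mulXn_cancel (phi : A) v k b :
  ~ inI ('X_v : A) phi -> inI phi ('X_v ^+ k * b) -> inI phi b.
Proof.
move=> nXphi; elim: k b => [|k ih] b; first by rewrite expr0 mul1r.
rewrite exprS -mulrA => -[h hh]; apply: ih.
have : inI ('X_v : A) (h * phi) by rewrite -hh mulrC; exists ('X_v ^+ k * b).
case/dvdX_mul => [[h' eh]|//]; exists h'; apply: (mulfI (mpolyX_neq0 U_(v))).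
by rewrite hh eh; ring.
Qed.

End VariableSubstitution.
Arguments mpolyX_neq0 {F}.
Arguments setX0 {F} v p.
Arguments inI_mulXn_cancel {F phi v k b}.

Section WeightedGrading.
Variables (F : fieldType) (w : 'I_3 -> nat).
Local Notation A := {mpoly F[3]}.

Definition wcomp (e : nat) (p : A) : A :=
  \sum_(m <- msupp p | wdeg w m == e) p@_m *: 'X_[m].

Definition whomog (d : nat) (p : A) : Prop := forall m, p@_m != 0 -> wdeg w m = d.

Lemma mcoeff_wcomp e p m : (wcomp e p)@_m = if wdeg w m == e then p@_m else 0.
Proof.
rewrite /wcomp linear_sum /= big_mkcond /=.
have E m' : (if wdeg w m' == e then (p@_m' *: 'X_[m'])@_m else 0)
    = if (wdeg w m' == e) && (m' == m) then p@_m' else 0.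
  by rewrite mcoeffZ mcoeffX; case: (wdeg w m' == e); case: eqP; rewrite ?mulr1 ?mulr0.
rewrite (eq_bigr _ (fun m' _ => E m')).
case: (boolP (m \in msupp p)) => hm.
  rewrite (bigD1_seq m) ?msupp_uniq //= eqxx andbT big1 ?addr0 //.
  by move=> m' /negbTE ->; rewrite andbF.
rewrite big1_seq; last first.
  move=> m' /andP[_ hm']; case: ifP => // /andP[_ /eqP em].
  by move: hm; rewrite -em hm'.
by rewrite memN_msupp_eq0 //; case: ifP.
Qed.

Lemma wcompD e p q : wcomp e (p + q) = wcomp e p + wcomp e q.
Proof. by apply/mpolyP => m; rewrite mcoeffD !mcoeff_wcomp mcoeffD; case: ifP; rewrite ?addr0. Qed.

Lemma wcompZ e c p : wcomp e (c *: p) = c *: wcomp e p.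
Proof. by apply/mpolyP => m; rewrite mcoeffZ !mcoeff_wcomp mcoeffZ; case: ifP; rewrite ?mulr0. Qed.

Lemma wcomp0 e : wcomp e 0 = 0.
Proof. by apply/mpolyP => m; rewrite mcoeff_wcomp mcoeff0; case: ifP. Qed.

Lemma wcomp_sum e (I : Type) (r : seq I) (f : I -> A) :
  wcomp e (\sum_(i <- r) f i) = \sum_(i <- r) wcomp e (f i).
Proof. exact: (big_morph (wcomp e) (wcompD e) (wcomp0 e)). Qed.

Lemma wcomp_whomog {d} e {p} : whomog d p -> wcomp e p = if d == e then p else 0.
Proof.
move=> hp; apply/mpolyP => m; rewrite mcoeff_wcomp.
have [hm0|hm] := eqVneq (p@_m) 0; first by case: (d == e); rewrite ?mcoeff0 hm0 if_same.
by rewrite (hp m hm); case: (d == e); rewrite ?mcoeff0.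
Qed.

Lemma wdegD m1 m2 : wdeg w (m1 + m2)%MM = (wdeg w m1 + wdeg w m2)%N.
Proof. by rewrite /wdeg -big_split; apply: eq_bigr => i _; rewrite mnmDE mulnDr. Qed.

Lemma wdegU i : wdeg w U_(i)%MM = w i.
Proof.
rewrite /wdeg (bigD1 i) //= mnm1E eqxx muln1 big1 ?addn0 // => j /negbTE hj.
by rewrite mnm1E eq_sym hj muln0.
Qed.

Lemma whomogX m : whomog (wdeg w m) 'X_[m].
Proof. by move=> k; rewrite mcoeffX; case: (m =P k) => [->|]; rewrite ?eqxx. Qed.

Lemma wdegUn i k : wdeg w (U_(i) *+ k)%MM = (k * w i)%N.
Proof.
rewrite /wdeg (bigD1 i) //= mulmnE mnm1E eqxx mul1n mulnC big1 ?addn0 // => j /negbTE hj.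
by rewrite mulmnE mnm1E eq_sym hj mul0n muln0.
Qed.

Lemma whomogXn i k : whomog (k * w i) ('X_i ^+ k).
Proof. by rewrite mpolyXn -wdegUn; apply: whomogX. Qed.

Lemma whomogMX m {d g} : whomog d g -> whomog (wdeg w m + d) ('X_[m] * g).
Proof.
move=> hg k; rewrite -mcoeff_msupp mulrC (perm_mem (msuppMX g m)).
by case/mapP => m' hm' ->; rewrite wdegD (hg m') //; rewrite mcoeff_msupp in hm'.
Qed.

Lemma whomog_mderiv i {d p} : whomog d p -> whomog (d - w i)%N (p^`M(i)).
Proof.
move=> hp m; rewrite mcoeff_deriv => h.
have h' : p@_(m + U_(i)) != 0 by apply: contraNneq h => ->; rewrite mul0rn.
by rewrite -(hp _ h') wdegD wdegU addnK.
Qed.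

Lemma wcompMr e a g d : whomog d g ->
  wcomp e (a * g) = (if (d <= e)%N then wcomp (e - d)%N a else 0) * g.
Proof.
move=> hg; elim/mpolyind: a => [|c m a _ _ ih].
  by rewrite mul0r wcomp0; case: ifP; rewrite ?wcomp0 ?mul0r.
rewrite mulrDl wcompD ih -scalerAl wcompZ (wcomp_whomog _ (whomogMX m hg)) wcompD wcompZ.
rewrite (wcomp_whomog _ (whomogX m)).
case: (leqP d e) => hle.
  have -> : ((wdeg w m + d)%N == e) = (wdeg w m == (e - d)%N).
    by apply/eqP/eqP => [<-|->]; [rewrite addnK|rewrite subnK].
  by case: eqP => _; rewrite ?scaler0 ?add0r // mulrDl -scalerAl.
by rewrite gtn_eqF ?(leq_trans hle (leq_addl _ _)) // scaler0 !mul0r addr0.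
Qed.

End WeightedGrading.
Arguments wcomp {F} w e p.
Arguments whomog {F} w d p.
Arguments wcompD {F w}.
Arguments wcompZ {F w}.
Arguments wcomp_sum {F w}.
Arguments wcomp_whomog {F w d} e {p}.
Arguments wcompMr {F w} e a {g d}.
Arguments whomogXn {F}.
Arguments whomog_mderiv {F w} i {d p}.

Section LinearDependenceModulo.
Variables (F : fieldType) (V : lmodType F) (J : V -> Prop).
Hypotheses (J0 : J 0) (JD : forall u v, J u -> J v -> J (u + v))
           (JZ : forall a u, J u -> J (a *: u)).

Lemma dependent_modulo n (s : 'I_n -> V) (u : 'I_n.+1 -> V) :
  (forall j, exists c : 'I_n -> F, J (u j - \sum_(i < n) c i *: s i)) ->
  exists2 a : 'I_n.+1 -> F, (exists j, a j != 0) & J (\sum_j a j *: u j).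
Proof.
move=> hu; have [c hc] := fin_all_exists hu.
pose M : 'M[F]_(n.+1, n) := \matrix_(j, i) c j i.
have : kermx M != 0.
  rewrite kermx_eq0 /row_free; apply/eqP => h.
  by have := rank_leq_col M; rewrite h ltnn.
case/rowV0Pn => a; rewrite sub_kermx => /eqP aM0 a_neq0.
exists (a ord0).
  apply/existsP; apply: contraNT a_neq0; rewrite negb_exists => /forallP a0.
  by apply/eqP/rowP => j; rewrite mxE; apply/eqP/negbNE/a0.
have ac0 i : \sum_j a ord0 j * c j i = 0.
  have := congr1 (fun B : 'M[F]_(1, n) => B ord0 i) aM0; rewrite !mxE => h.
  by rewrite -[RHS]h; apply: eq_bigr => j _; rewrite mxE.
have -> : \sum_j a ord0 j *: u j = \sum_j a ord0 j *: (u j - \sum_(i < n) c j i *: s i).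
  rewrite -[LHS]subr0; under [RHS]eq_bigr => j _ do rewrite scalerBr.
  rewrite sumrB; congr (_ - _); symmetry.
  under eq_bigr => j _ do rewrite scaler_sumr.
  rewrite exchange_big big1 //= => i _.
  by under eq_bigr => j _ do rewrite scalerA; rewrite -scaler_suml ac0 scale0r.
by elim/big_ind: _ => // j _; apply: JZ.
Qed.

End LinearDependenceModulo.
Arguments dependent_modulo {F V J} J0 JD JZ {n s u}.

Section Ideal3.
Variables (F : fieldType) (g1 g2 g3 : {mpoly F[3]}).
Local Notation I := (in_ideal3 g1 g2 g3).

Lemma in_ideal3_0 : I 0.
Proof. by exists 0, 0, 0; rewrite !mul0r !addr0. Qed.

Lemma in_ideal3D p q : I p -> I q -> I (p + q).
Proof.
move=> [a1 [a2 [a3 ->]]] [b1 [b2 [b3 ->]]].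
by exists (a1 + b1), (a2 + b2), (a3 + b3); ring.
Qed.

Lemma in_ideal3Mr c p : I p -> I (c * p).
Proof. by move=> [a1 [a2 [a3 ->]]]; exists (c * a1), (c * a2), (c * a3); ring. Qed.

Lemma in_ideal3Z c p : I p -> I (c *: p).
Proof. by rewrite -mul_mpolyC; apply: in_ideal3Mr. Qed.

Lemma in_ideal3_wcomp w d1 d2 d3 e p :
  whomog w d1 g1 -> whomog w d2 g2 -> whomog w d3 g3 -> I p -> I (wcomp w e p).
Proof.
move=> h1 h2 h3 [a1 [a2 [a3 ->]]].
by rewrite !wcompD (wcompMr _ _ h1) (wcompMr _ _ h2) (wcompMr _ _ h3); do 3!eexists.
Qed.

End Ideal3.
Arguments in_ideal3_0 {F g1 g2 g3}.
Arguments in_ideal3D {F g1 g2 g3}.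
Arguments in_ideal3Z {F g1 g2 g3} c {p}.

Definition jacobian_ann0 {F : fieldType} (phi : {mpoly F[3]}) : Prop :=
  forall q, inI phi (q * phi^`M(i0)) -> inI phi (q * phi^`M(i1)) ->
    inI phi (q * phi^`M(i2)) -> inI phi q.

Section JacobianIdeal.
Variables (F : fieldType) (w : 'I_3 -> nat) (phi : {mpoly F[3]}).
Hypotheses (w_gt0 : forall i, (0 < w i)%N) (phi_whomog : weight_homogeneous w phi)
           (phi_findim : Asing_findim phi).
Local Notation J := (in_ideal3 (phi^`M(i0)) (phi^`M(i1)) (phi^`M(i2))).

Lemma jacobian_wcomp e {p} : J p -> J (wcomp w e p).
Proof.
case: phi_whomog => _ [d hd].
have hphi : whomog w d phi by move=> m; rewrite -mcoeff_msupp; apply: hd.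
by apply: in_ideal3_wcomp; apply: (whomog_mderiv _ hphi).
Qed.

Lemma jacobian_Xn v : exists k, J ('X_v ^+ k).
Proof.
case: phi_findim => n [s hs].
have [a [j0 aj0] Ja] := dependent_modulo in_ideal3_0 in_ideal3D in_ideal3Z
  (fun j : 'I_n.+1 => hs ('X_v ^+ j)).
exists j0; have := in_ideal3Z (a j0)^-1 (jacobian_wcomp (j0 * w v) Ja).
rewrite wcomp_sum (bigD1 j0) //= big1 ?addr0 => [|j ne_j_j0].
  by rewrite wcompZ (wcomp_whomog _ (whomogXn w v j0)) eqxx scalerA mulVf // scale1r.
rewrite wcompZ (wcomp_whomog _ (whomogXn w v j)) eqn_pmul2r ?w_gt0 //.
by rewrite (negbTE ne_j_j0 : (j == j0 :> nat) = false) scaler0.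
Qed.

Lemma not_dvdX01 : ~ (inI ('X_i0 : {mpoly F[3]}) phi /\ inI ('X_i1 : {mpoly F[3]}) phi).
Proof.
case=> -[a ephi] /dvdX_setX0; rewrite ephi setX0M setX0X /= => /eqP.
rewrite mulf_eq0 (negbTE (mpolyX_neq0 _)) orbF => /eqP /dvdX_setX0 [b eb].
pose s (p : {mpoly F[3]}) := setX0 i1 (setX0 i0 p).
have sD p q : s (p + q) = s p + s q by rewrite /s !setX0D.
have sM p q : s (p * q) = s p * s q by rewrite /s !setX0M.
have sX0 : s 'X_i0 = 0 by rewrite /s setX0X /= /setX0 comp_mpoly0.
have sX1 : s 'X_i1 = 0 by rewrite /s !setX0X.
have s_jac j : s (phi^`M(j)) = 0.
  by rewrite ephi eb !mderivM !sD !sM sX0 sX1 !mulr0 !mul0r !addr0.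
have [k [a1 [a2 [a3 eX2]]]] := jacobian_Xn i2.
have := congr1 s eX2; rewrite !sD !sM !s_jac !mulr0 !addr0.
have sX2n : s ('X_i2 ^+ k) = 'X_i2 ^+ k.
  elim: k {eX2} => [|k ih]; first by rewrite !expr0 /s /setX0 !comp_mpoly1.
  by rewrite !exprS sM ih /s !setX0X.
by rewrite sX2n mpolyXn => /eqP; rewrite (negbTE (mpolyX_neq0 _)).
Qed.

Lemma jacobian_ann0_whis : jacobian_ann0 phi.
Proof.
move=> q hq0 hq1 hq2.
have qJ p : J p -> inI phi (q * p).
  move=> [a1 [a2 [a3 ->]]]; rewrite !mulrDr ![q * (_ * _)]mulrCA.
  by apply: inID; [apply: inID|]; apply: inIMr.
have [v nXv] : exists v, ~ inI ('X_v : {mpoly F[3]}) phi.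
  case: (eqVneq (setX0 i0 phi) 0) => [/dvdX_setX0 h0|h0]; last first.
    by exists i0; rewrite dvdX_setX0; apply/eqP.
  case: (eqVneq (setX0 i1 phi) 0) => [/dvdX_setX0 h1|h1]; last first.
    by exists i1; rewrite dvdX_setX0; apply/eqP.
  by case: not_dvdX01.
have [k hk] := jacobian_Xn v.
by apply: (inI_mulXn_cancel (k := k) nXv); rewrite mulrC; apply: qJ.
Qed.

End JacobianIdeal.
Arguments jacobian_ann0_whis {F w phi}.

Section Derivation3.
Variables (F : fieldType) (phi : {mpoly F[3]}).
Variable Q : {mpoly F[3]} -> {mpoly F[3]} -> {mpoly F[3]} -> {mpoly F[3]}.
Hypotheses (hQ : is_der3 phi Q) (h2 : (2%:R : F) != 0).
Local Notation x := (vx F).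
Local Notation y := (vy F).
Local Notation z := (vz F).

Lemma der3_der1l g h : is_der1 phi (fun f => Q f g h).
Proof. by case: hQ => wd hl hm _ _; split=> *; [apply: wd | apply: hl | apply: hm]. Qed.

Lemma der3_der2r f : is_der2 phi (Q f).
Proof.
case: hQ => wd hl hm s12 s23; split=> [g g' h e | a g g' h | g g' h | g h].
- by rewrite (s12 f g) (s12 f g') (wd _ _ _ _ e); reflexivity.
- by rewrite (s12 f) hl (s12 f g) (s12 f g'); apply: eqm_eq; rewrite scalerN opprD.
- by rewrite (s12 f) hm (s12 f g) (s12 f g'); apply: eqm_eq; ring.
- exact: s23.
Qed.

Lemma der3_cycle f g h : eqm phi (Q f g h) (Q g h f).
Proof.
case: hQ => _ _ _ s12 s23.
by rewrite (s23 f) (s12 f) (s23 h) (s12 h) opprK opprK; reflexivity.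
Qed.

Lemma der3_chain f g h :
  eqm phi (Q f g h) (dotv (grad f) (crossv (grad g) (grad h)) * Q x y z).
Proof.
case: (hQ) => _ _ _ s12 s23.
have diag12 a b : eqm phi (Q a a b) 0 by apply: eqm_opp_eq0.
have diag13 a b : eqm phi (Q a b a) 0 by rewrite s23 diag12 oppr0; reflexivity.
rewrite (der1_chain (der3_der1l g h)); vec_unfold.
rewrite (der2_chain (der3_der2r x) h2) (der2_chain (der3_der2r y) h2).
rewrite (der2_chain (der3_der2r z) h2); vec_unfold.
rewrite !diag12 !diag13 -(der3_cycle x y z) (der3_cycle z x y).
by apply: eqm_eq; ring.
Qed.

Hypothesis phi_ann0 : jacobian_ann0 phi.

Lemma der3_eq0 f g h : eqm phi (Q f g h) 0.
Proof.
have Qphi a b : eqm phi (Q phi a b) 0.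
  case: hQ => wd _ _ _ _; rewrite (wd _ _ _ _ eqm_phi0).
  exact: (der10 (der3_der1l a b)).
have coord_minor a b : eqm phi (Q phi a b) (dotv (grad phi) (crossv (grad a) (grad b)) * Q x y z).
  exact: der3_chain.
have T0 : inI phi (Q x y z).
  apply: phi_ann0; apply/eqm0; rewrite mulrC.
  - apply: eqm_trans _ (Qphi y z); rewrite coord_minor.
    by apply: eqm_eq; vec_unfold; coord_unfold; ring.
  - apply: eqm_trans _ (Qphi z x); rewrite coord_minor.
    by apply: eqm_eq; vec_unfold; coord_unfold; ring.
  - apply: eqm_trans _ (Qphi x y); rewrite coord_minor.
    by apply: eqm_eq; vec_unfold; coord_unfold; ring.
by rewrite der3_chain; move/eqm0: T0 => ->; rewrite mulr0; reflexivity.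
Qed.

End Derivation3.
Arguments der3_eq0 {F phi Q}.

Section VectorFieldDerivations.
Variables (F : fieldType) (phi : {mpoly F[3]}).
Local Notation A := {mpoly F[3]}.

Definition der1_of (f : vec F) : A -> A := fun g => dotv f (grad g).

Definition der2_of (f : vec F) : A -> A -> A :=
  fun g h => dotv (crossv (grad g) (grad h)) f.

Lemma trip1_der1_of f : trip1 (der1_of f) = f.
Proof. by case: f => [[f1 f2] f3]; rewrite /der1_of; vec_unfold; coord_unfold; congr (_, _, _); ring. Qed.

Lemma trip2_der2_of f : trip2 (der2_of f) = f.
Proof. by case: f => [[f1 f2] f3]; rewrite /der2_of; vec_unfold; coord_unfold; congr (_, _, _); ring. Qed.

Lemma der1_of_is_der1 f : inI phi (dotv f (grad phi)) -> is_der1 phi (der1_of f).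
Proof.
move=> hf; split=> [g g' [h eh] | a g g' | g g']; rewrite /der1_of.
- rewrite /eqm; have -> : dotv f (grad g) - dotv f (grad g') =
      h * dotv f (grad phi) + phi * dotv f (grad h).
    by rewrite -[g](subrK g') eh; vec_unfold; rewrite !mderivD !mderivM; ring.
  by apply: inID; [apply: inIMr | rewrite mulrC; apply: inI_mulphi].
- by apply: eqm_eq; vec_unfold; rewrite !mderivD !mderivZ -!mul_mpolyC; ring.
- by apply: eqm_eq; vec_unfold; rewrite !mderivM; ring.
Qed.

Lemma der2_of_is_der2 f : inIv phi (crossv f (grad phi)) -> is_der2 phi (der2_of f).
Proof.
move=> [hf1 [hf2 hf3]]; split=> [g g' h [k ek] | a g g' h | g g' h | g h]; rewrite /der2_of.
- rewrite /eqm.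
  have -> : dotv (crossv (grad g) (grad h)) f - dotv (crossv (grad g') (grad h)) f =
      k * (h^`M(i0) * c1 (crossv f (grad phi)) + h^`M(i1) * c2 (crossv f (grad phi))
           + h^`M(i2) * c3 (crossv f (grad phi)))
      + phi * dotv (crossv (grad k) (grad h)) f.
    by rewrite -[g](subrK g') ek; vec_unfold; rewrite !mderivD !mderivM; ring.
  apply: inID; last by rewrite mulrC; apply: inI_mulphi.
  by apply: inIMr; apply: inID; [apply: inID|]; apply: inIMr.
- by apply: eqm_eq; vec_unfold; rewrite !mderivD !mderivZ -!mul_mpolyC; ring.
- by apply: eqm_eq; vec_unfold; rewrite !mderivM; ring.
- by apply: eqm_eq; vec_unfold; ring.
Qed.

End VectorFieldDerivations.
Arguments der1_of {F}.
Arguments der2_of {F}.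
Arguments trip1_der1_of {F}.
Arguments trip2_der2_of {F}.
Arguments der1_of_is_der1 {F phi f}.
Arguments der2_of_is_der2 {F phi f}.

Section Coboundary1.
Variables (F : fieldType) (phi : {mpoly F[3]}) (Q : {mpoly F[3]} -> {mpoly F[3]}).
Hypothesis hQ : is_der1 phi Q.
Local Notation x := (vx F).
Local Notation y := (vy F).
Local Notation z := (vz F).

#[local] Instance der1_proper : Proper (eqm phi ==> eqm phi) Q.
Proof. by case: hQ. Qed.

Lemma delta1_is_der2 : is_der2 phi (delta1 phi Q).
Proof.
case: (hQ) => _ hl hm; split=> [f f' g e | a f g h | f g h | f g]; rewrite /delta1.
- by rewrite e; reflexivity.
- rewrite !pbr_linl hl pbr_linr hl; apply: eqm_eq; rewrite -!mul_mpolyC; ring.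
- rewrite pbrMl hm pbrDr !pbrMr pbrMl (der1D hQ) !hm (pbrC _ _ h f) (pbrC _ _ h g).
  by apply: eqm_eq; ring.
- by rewrite (pbrC _ _ g f) (der1N hQ); apply: eqm_eq; ring.
Qed.

Lemma delta1_coord :
  [/\ eqm phi (delta1 phi Q y z) (c1 (Lvec phi (trip1 Q))),
      eqm phi (delta1 phi Q z x) (c2 (Lvec phi (trip1 Q)))
    & eqm phi (delta1 phi Q x y) (c3 (Lvec phi (trip1 Q)))].
Proof.
rewrite /delta1 /Lvec.
have -> : pbr phi y z = phi^`M(i0) by vec_unfold; coord_unfold; ring.
have -> : pbr phi z x = phi^`M(i1) by vec_unfold; coord_unfold; ring.
have -> : pbr phi x y = phi^`M(i2) by vec_unfold; coord_unfold; ring.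
split; rewrite (der1_chain hQ (phi^`M(_))); apply: eqm_eq; vec_unfold; coord_unfold;
  rewrite /c1 /c2 /c3 /=;
  rewrite !mderivD !mderivM ?(mderiv_comm i1 i0) ?(mderiv_comm i2 i0) ?(mderiv_comm i2 i1); ring.
Qed.

End Coboundary1.
Arguments delta1_is_der2 {F phi Q}.
Arguments delta1_coord {F phi Q}.

Section Cohomology.
Variables (F : fieldType) (phi : {mpoly F[3]}).
Hypothesis h2 : (2%:R : F) != 0.
Local Notation A := {mpoly F[3]}.
Local Notation x := (vx F).
Local Notation y := (vy F).
Local Notation z := (vz F).

Lemma delta0_eq0P f :
  (forall g, eqm phi (delta0 phi f g) 0) <-> inIv phi (crossv (grad f) (grad phi)).
Proof.
have pbr_crossv g : pbr phi g f = g^`M(i0) * c1 (crossv (grad f) (grad phi))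
    + g^`M(i1) * c2 (crossv (grad f) (grad phi)) + g^`M(i2) * c3 (crossv (grad f) (grad phi)).
  by vec_unfold; ring.
rewrite /delta0; split=> [hf | [hf1 [hf2 hf3]] g].
  move: (hf x) (hf y) (hf z); rewrite !pbr_crossv => /eqm0 hx /eqm0 hy /eqm0 hz.
  by split; [|split]; [move: hx | move: hy | move: hz]; congr inI; coord_unfold; ring.
by apply/eqm0; rewrite pbr_crossv; apply: inID; [apply: inID|]; apply: inIMr.
Qed.

Section Cocycles1.
Variable Q : A -> A.
Hypothesis hQ : is_der1 phi Q.

Lemma delta1_eq0P : (forall f0 f1, eqm phi (delta1 phi Q f0 f1) 0) <->
  inI phi (dotv (trip1 Q) (grad phi)) /\ inIv phi (Lvec phi (trip1 Q)).
Proof.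
have [e1 e2 e3] := delta1_coord hQ.
split=> [hc | [_ [hL1 [hL2 hL3]]] f0 f1].
  split; first exact: der1_tangent hQ.
  by split; [|split]; apply/eqm0; [rewrite -e1 | rewrite -e2 | rewrite -e3]; apply: hc.
rewrite (der2_chain (delta1_is_der2 hQ) h2) /trip2 /dotv /c1 /c2 /c3 /mkv /=.
move/eqm0: hL1 => hL1; move/eqm0: hL2 => hL2; move/eqm0: hL3 => hL3.
by rewrite e1 e2 e3 hL1 hL2 hL3; apply: eqm_eq; ring.
Qed.

Lemma der1_coboundaryP : (exists h, forall g, eqm phi (Q g) (delta0 phi h g)) <->
  exists h, eqmv phi (trip1 Q) (crossv (grad h) (grad phi)).
Proof.
split=> -[h hh]; exists h.
  by split; [|split]; rewrite /trip1 /c1 /c2 /c3 /mkv /= hh;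
    apply: eqm_eq; rewrite /delta0; vec_unfold; coord_unfold; ring.
move=> g; rewrite (der1_chain hQ); case: hh; vec_unfold => -> [-> ->].
by apply: eqm_eq; rewrite /delta0; vec_unfold; ring.
Qed.

End Cocycles1.

Section Cocycles2.
Variable Q : A -> A -> A.
Hypothesis hQ : is_der2 phi Q.

#[local] Instance der2_proper : Proper (eqm phi ==> eqm phi ==> eqm phi) Q.
Proof.
move=> f f' ef g g' eg; case: (hQ) => wd _ _ _; rewrite (wd _ _ _ ef).
by case: (der2_der1r hQ f') => wdr _ _; apply: wdr.
Qed.

Lemma delta2_is_der3 : is_der3 phi (delta2 phi Q).
Proof.
case: (hQ) => _ hl hm hs; split=> [f f' g h e | a f g h k | f g h k | f g h | f g h].
- by rewrite /delta2 e; reflexivity.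
- case: (der2_der1r hQ (pbr phi h k)) => _ hlr _.
  rewrite /delta2 !pbr_linl !hl hlr !pbr_linr.
  by apply: eqm_eq; rewrite -!mul_mpolyC; ring.
- case: (der2_der1r hQ (pbr phi h k)) => _ _ hmr.
  rewrite /delta2 !pbrMl !hm !pbrDr !pbrMr (der1D (der2_der1l hQ k)) (der1D (der2_der1l hQ h)).
  rewrite !hm hmr (pbrC _ _ h f) (pbrC _ _ h g) (pbrC _ _ k f) (pbrC _ _ k g).
  by apply: eqm_eq; ring.
- rewrite /delta2 (hs g f) (pbrC _ _ g f) pbrNr (der1N (der2_der1l hQ h)).
  by apply: eqm_eq; ring.
- rewrite /delta2 (hs h g) (pbrC _ _ h g) pbrNr (der1N (der2_der1l hQ f)).
  by apply: eqm_eq; ring.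
Qed.

Lemma der2_coboundaryP :
  (exists Q1, is_der1 phi Q1 /\ forall f g, eqm phi (Q f g) (delta1 phi Q1 f g)) <->
  exists f, inI phi (dotv f (grad phi)) /\ eqmv phi (trip2 Q) (Lvec phi f).
Proof.
split=> [[Q1 [hQ1 eQ]] | [f [hf eQ]]].
  exists (trip1 Q1); split; first exact: der1_tangent hQ1.
  have [e1 e2 e3] := delta1_coord hQ1.
  rewrite /eqmv /trip2 /c1 /c2 /c3 /mkv /= !eQ.
  by split; [|split]; [exact: e1 | exact: e2 | exact: e3].
have hQ1 := der1_of_is_der1 hf; exists (der1_of f); split=> //.
apply: der2_eq_trip2 => //; first exact: delta1_is_der2.
have [e1 e2 e3] := delta1_coord hQ1; rewrite trip1_der1_of in e1 e2 e3.
case: eQ => [eQ1 [eQ2 eQ3]].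
by split; [|split]; [apply: eqm_trans eQ1 (eqm_sym e1) | apply: eqm_trans eQ2 (eqm_sym e2)
  | apply: eqm_trans eQ3 (eqm_sym e3)].
Qed.

End Cocycles2.

End Cohomology.
Arguments delta2_is_der3 {F phi Q}.

Lemma is_der2_0 (F : fieldType) (phi : {mpoly F[3]}) : is_der2 phi (fun _ _ => 0).
Proof. by split=> *; apply: eqm_eq; rewrite ?scaler0 ?mulr0 ?addr0 ?oppr0. Qed.

Lemma pchar0_natr_neq0 {F : fieldType} n : [pchar F] =i pred0 -> (0 < n)%N -> n%:R != 0 :> F.
Proof. by move=> F0 n_gt0; apply/negP => /(natf0_pchar n_gt0) [p]; rewrite F0. Qed.

Theorem mainTheorem8 (F : fieldType) (w : 'I_3 -> nat) (phi : {mpoly F[3]}) :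
  [pchar F] =i pred0 ->
  (forall i, (0 < w i)%N) ->
  gcdn (gcdn (w i0) (w i1)) (w i2) = 1%N ->
  whis w phi ->
  [/\
   (forall Q, is_der3 phi Q -> forall f g h, eqm phi (Q f g h) 0)
   /\ (forall Q, is_der3 phi Q ->
        exists Q2, is_der2 phi Q2 /\ forall f g h, eqm phi (Q f g h) (delta2 phi Q2 f g h)),
   [/\ forall Q, is_der1 phi Q -> inI phi (dotv (trip1 Q) (grad phi)),
       forall f, inI phi (dotv f (grad phi)) ->
         exists Q, is_der1 phi Q /\ eqmv phi (trip1 Q) f
     & forall Q Q', is_der1 phi Q -> is_der1 phi Q' ->
         eqmv phi (trip1 Q) (trip1 Q') -> forall g, eqm phi (Q g) (Q' g)],
   [/\ forall Q, is_der2 phi Q -> inIv phi (crossv (trip2 Q) (grad phi)),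
       forall f, inIv phi (crossv f (grad phi)) ->
         exists Q, is_der2 phi Q /\ eqmv phi (trip2 Q) f
     & forall Q Q', is_der2 phi Q -> is_der2 phi Q' ->
         eqmv phi (trip2 Q) (trip2 Q') -> forall g h, eqm phi (Q g h) (Q' g h)],
   (forall f : {mpoly F[3]},
      (forall g, eqm phi (delta0 phi f g) 0) <-> inIv phi (crossv (grad f) (grad phi)))
   /\
   (forall Q, is_der1 phi Q ->
      ((forall f0 f1, eqm phi (delta1 phi Q f0 f1) 0) <->
         (inI phi (dotv (trip1 Q) (grad phi)) /\ inIv phi (Lvec phi (trip1 Q))))
      /\ ((exists h, forall g, eqm phi (Q g) (delta0 phi h g)) <->
          exists h, eqmv phi (trip1 Q) (crossv (grad h) (grad phi))))
 & forall Q, is_der2 phi Q ->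
     (forall f0 f1 f2, eqm phi (delta2 phi Q f0 f1 f2) 0)
     /\ ((exists Q1, is_der1 phi Q1 /\ forall f g, eqm phi (Q f g) (delta1 phi Q1 f g)) <->
         exists f, inI phi (dotv f (grad phi)) /\ eqmv phi (trip2 Q) (Lvec phi f))].
Proof.
move=> F0 w_gt0 _ [phi_whomog [_ phi_findim]].
have h2 := pchar0_natr_neq0 2 F0 isT.
have ann0 := jacobian_ann0_whis w_gt0 phi_whomog phi_findim.
have vec_refl (f : vec F) : eqmv phi f f by split; [|split]; reflexivity.
split.
- split=> Q hQ; first exact: der3_eq0 hQ h2 ann0.
  exists (fun _ _ => 0); split=> [|f g h]; first exact: is_der2_0.
  by rewrite (der3_eq0 hQ h2 ann0) /delta2 !pbr0r; apply: eqm_eq; ring.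
- split=> [Q hQ | f hf | Q Q' hQ hQ']; [exact: der1_tangent | | exact: der1_eq_trip1].
  by exists (der1_of f); rewrite trip1_der1_of; split; [exact: der1_of_is_der1 | exact: vec_refl].
- split=> [Q hQ | f hf | Q Q' hQ hQ']; [exact: der2_tangent | | exact: der2_eq_trip2].
  by exists (der2_of f); rewrite trip2_der2_of; split; [exact: der2_of_is_der2 | exact: vec_refl].
- split=> [f | Q hQ]; first exact: delta0_eq0P.
  by split; [exact: delta1_eq0P | exact: der1_coboundaryP].
- move=> Q hQ; split; last exact: der2_coboundaryP.
  exact: der3_eq0 (delta2_is_der3 hQ) h2 ann0.
Qed.
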